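(* For all $n,k\in\mathbb N$ there exists $N\in\mathbb N$ such that every finite strongly connected digraph $D$ on at least $N$ vertices contains one of the following: (1) a dicycle on at least $n$ vertices; (2) an $n$-narrow semi-chain $(C_1,C_2,\ldots,C_k)$ of $k$ dicycles; (3) an $n$-short $(m,1)$-system of dipaths for some $m\ge (k-1)n+3$.
   Context: All digraphs are finite; a dipath is a directed path, a dicycle a directed cycle, and lengths count edges. A sequence $(C_1,\ldots,C_k)$ of dicycles is a semi-chain if for all $1\le i,j\le k$ we have $V(C_i)\cap V(C_j)\ne\emptyset$ if and only if $|i-j|=1$; it is $n$-narrow if $|V(C_i)|<n$ for every $i$. Let $x,y$ be two, possibly equal, vertices and $m,\ell$ positive integers. An $(m,\ell)$-system of $x$--$y$ dipaths is a system of $m+\ell$ internally disjoint dipaths (or dicycles through $x$ in case $x=y$), $m$ of which are $x$--$y$ dipaths and $\ell$ of which are $y$--$x$ dipaths; an $(m,\ell)$-system of dipaths is such a system for some $x,y$. It is $n$-short if, in case $x\ne y$, $|V(P)\cup V(Q)|<n$ for every $x$--$y$ dipath $P$ and every $y$--$x$ dipath $Q$ of the system, and, in case $x=y$, every dicycle of the system has length less than $n$. *)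

(* A (loopless) digraph is a finite vertex type T : finType
   with an irreflexive edge relation e : rel T (parallel edges are irrelevant). *)
From mathcomp Require Import all_boot.
Set Implicit Arguments. Unset Strict Implicit. Unset Printing Implicit Defensive.

Section Digraphs.
Variables (T : finType) (e : rel T).

Definition strongly_connected : Prop := forall u v : T, connect e u v.

(* A dipath is given by its full vertex sequence; dipath a b p: p is an
   a--b dipath (distinct vertices, consecutive ones joined by edges). *)
Definition dipath (a b : T) (p : seq T) : bool :=
  match p with
  | [::] => false
  | z :: s => [&& z == a, path e z s, uniq p & last z s == b]
  end.

(* A dicycle is given by the cyclic sequence of its (distinct) vertices;
   its vertex set is the set of elements of c, its length is size c. *)
Definition dicycle (c : seq T) : bool := [&& c != [::], cycle e c & uniq c].

Definition narrow_semi_chain (n k : nat) (cs : seq (seq T)) : Prop :=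
  [/\ size cs = k,
      all dicycle cs,
      all (fun c => size c < n) cs &
      forall i j, i < k -> j < k -> i != j ->
        has (fun v => v \in nth [::] cs i) (nth [::] cs j)
        = (i == j.+1) || (j == i.+1)].

Definition system (x y : T) (m l : nat) (F G : seq (seq T)) : Prop :=
  [/\ size F = m, size G = l,
      (if x != y then all (dipath x y) F && all (dipath y x) G
       else all (fun c => dicycle c && (x \in c)) (F ++ G)),
      uniq (F ++ G) &
      forall i j, i < size (F ++ G) -> j < size (F ++ G) -> i != j ->
        forall v, v \in nth [::] (F ++ G) i -> v \in nth [::] (F ++ G) j ->
          v = x \/ v = y].

Definition n_short_system (n : nat) (x y : T) (F G : seq (seq T)) : Prop :=
  if x != y then
    forall P Q, P \in F -> Q \in G -> size (undup (P ++ Q)) < n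
  else forall c, c \in F ++ G -> size c < n.

End Digraphs.

(* Assume that every dicycle has fewer than n vertices, and let m = (k-1)n + 3.

   If some vertex x has more than (m+1)^(n-1) out-neighbours, take a
   shortest-path in-tree towards x.  An out-neighbour y of x closes the dicycle
   x -> y -> ... -> x along its tree path, so it has depth below n - 1.  Counting
   level by level, some vertex z then has more than m children whose subtrees
   contain out-neighbours of x.  Entering m of these subtrees from x and
   following tree paths to z gives m internally disjoint x--z dipaths; together
   with the tree path from z back to x, each of them stays on one of the short
   dicycles above, so they form an n-short (m,1)-system.  If z = x, m + 1 such
   dicycles through x form the system instead.

   Otherwise out-degrees are bounded, so a large digraph contains a geodesic
   with at least 2kn + 2 edges.  Closing each of its edges into a dicycle gives
   dicycles shorter than n that can only meet when their edges are less than 2n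
   apart on the geodesic, and greedily jumping to the farthest later dicycle
   that still meets the current one extracts a semi-chain of k of them. *)

From mathcomp Require Import all_boot zify.
From Stdlib Require Import Classical.
Set Implicit Arguments. Unset Strict Implicit. Unset Printing Implicit Defensive.

Lemma card_bigcup_leq (I T : finType) (A : {pred I}) (F : I -> {set T}) b :
  (forall i, i \in A -> #|F i| <= b) -> #|\bigcup_(i in A) F i| <= #|A| * b.
Proof.
move=> Fb; apply: (@leq_trans (\sum_(i in A) #|F i|)).
  apply: (big_ind2 (fun (U : {set T}) s => #|U| <= s)) => // [|U s V t Us Vt].
    by rewrite cards0.
  exact: leq_trans (leq_card_setU U V) (leq_add Us Vt).
by rewrite -sum1_card big_distrl /= leq_sum // => i /Fb; rewrite mul1n.
Qed.

Lemma last_take (T : Type) (x : T) s i :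
  i <= size s -> last x (take i s) = nth x (x :: s) i.
Proof.
elim: s x i => [|y s IHs] x [|i] //= le_is.
by rewrite IHs //; apply: set_nth_default.
Qed.

Lemma internally_disjoint_by_tag (T : eqType) (S : seq (seq T)) (x y : T) tag :
    (forall i v, i < size S -> v \in nth [::] S i -> [\/ v = x, v = y | tag v = i]) ->
  forall i j, i < size S -> j < size S -> i != j ->
  forall v, v \in nth [::] S i -> v \in nth [::] S j -> v = x \/ v = y.
Proof.
move=> Stag i j iS jS /negP ij v /(Stag _ _ iS) [->|->|vi]; [by left|by right|].
by move=> /(Stag _ _ jS) [->|->|vj]; [left|right|case: ij; rewrite -vi vj].
Qed.

Section Distance.
Variables (T : finType) (e : rel T).

Definition walk a p b := path e a p && (last a p == b).

Lemma walk_cat a p b q c : walk a p b -> walk b q c -> walk a (p ++ q) c.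
Proof. by rewrite /walk cat_path last_cat => /andP[-> /eqP->]. Qed.

Lemma cycle_walk c u w : cycle e c -> u \in c -> w \in c ->
  exists2 q, walk u q w & size q < size c.
Proof.
move=> cyc_c uc wc; case: (rot_to uc) => i s rot_c.
have : cycle e (u :: s) by rewrite -rot_c rot_cycle.
rewrite /= rcons_path => /andP[path_s _]; have ws : w \in u :: s by rewrite -rot_c mem_rot.
have le_ws : index w (u :: s) <= size s by rewrite -ltnS index_mem.
exists (take (index w (u :: s)) s).
  by rewrite /walk (take_path _ path_s) last_take // nth_index ?eqxx.
by have := size_rot i c; rewrite rot_c size_take_min /= => <-; lia.
Qed.

Hypothesis sc : strongly_connected e.

Lemma walk_exists a b : exists p, walk a p b.
Proof. by have /connectP[p path_p ->] := sc a b; exists p; rewrite /walk path_p /=. Qed.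

Lemma walk_length_exists a b : exists i, [exists t : i.-tuple T, walk a t b].
Proof.
by have [p wp] := walk_exists a b; exists (size p); apply/existsP; exists (in_tuple p).
Qed.

Definition dist a b := ex_minn (walk_length_exists a b).

Lemma dist_walk a b : exists2 p, walk a p b & size p = dist a b.
Proof.
rewrite /dist; case: ex_minnP => i /existsP[t wt] _.
by exists t; rewrite ?size_tuple.
Qed.

Lemma dist_min a b p : walk a p b -> dist a b <= size p.
Proof.
rewrite /dist; case: ex_minnP => i _ min_i wp; apply: min_i.
by apply/existsP; exists (in_tuple p).
Qed.

Lemma dist_eq0 a b : (dist a b == 0) = (a == b).
Proof.
apply/eqP/eqP => [|<-].
  by have [[|c p] /andP[_ /eqP <-] //= <-] := dist_walk a b.
by apply/eqP; rewrite -leqn0 (@dist_min a a [::]) // /walk /=.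
Qed.

Lemma dist_succ a b : a != b -> exists2 c, e a c & (dist c b).+1 = dist a b.
Proof.
move=> ab; have [[|c p] wp size_p] := dist_walk a b.
  by move: wp ab; rewrite /walk /= => /eqP->; rewrite eqxx.
move: wp => /andP[/= /andP[eac path_p] last_p]; exists c => //.
have [q wq size_q] := dist_walk c b.
have : dist a b <= size (c :: q) by apply: dist_min; rewrite /walk /= eac.
have : dist c b <= size p by apply: dist_min; rewrite /walk path_p.
by move: size_p size_q => /= <- <-; lia.
Qed.

Lemma dist_pred a b : a != b -> exists2 u, e u b & (dist a u).+1 = dist a b.
Proof.
move=> ab; have [p] := dist_walk a b; case/lastP: p => [|p c].
  by move: ab; rewrite /walk /= => /negbTE ->.
rewrite /walk rcons_path last_rcons size_rcons => /andP[/andP[path_p euc] /eqP cb] size_p.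
exists (last a p); first by rewrite -cb.
have [q wq size_q] := dist_walk a (last a p).
have : dist a b <= size (rcons q b).
  apply: dist_min; move: wq; rewrite /walk rcons_path last_rcons => /andP[-> /eqP->].
  by rewrite -cb euc eqxx.
have : dist a (last a p) <= size p by apply: dist_min; rewrite /walk path_p /=.
by rewrite size_rcons; lia.
Qed.

Definition edge_cycle u v := v :: shorten v (xchoose (walk_exists v u)).

Lemma edge_cycleP u v : e u v ->
  [/\ dicycle e (edge_cycle u v), u \in edge_cycle u v & v \in edge_cycle u v].
Proof.
rewrite /edge_cycle; move: (xchoose _) (xchooseP (walk_exists v u)) => p.
move=> /andP[path_p /eqP <-]; case: (shortenP path_p) => p' path_p' uniq_p' _ euv.
by rewrite /dicycle uniq_p' /= rcons_path path_p' euv mem_last mem_head.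
Qed.

Lemma card_ball r D : (forall u, #|[set w | e u w]| <= D) ->
  forall i, #|[set v | dist r v <= i]| <= D.+1 ^ i.
Proof.
move=> deg; elim=> [|i IHi].
  rewrite (_ : [set v | _] = [set r]) ?cards1 //.
  by apply/setP => v; rewrite !inE leqn0 dist_eq0 eq_sym.
have ball_sub : [set v | dist r v <= i.+1] \subset
    \bigcup_(u in [set v | dist r v <= i]) (u |: [set w | e u w]).
  apply/subsetP => v; rewrite inE => le_vi; apply/bigcupP.
  have [le_vi'|lt_iv] := leqP (dist r v) i; first by exists v; rewrite !inE ?eqxx.
  have rv : r != v by rewrite -dist_eq0 -lt0n; lia.
  have [u euv du] := dist_pred rv.
  by exists u; rewrite !inE ?euv ?orbT //; lia.
apply: leq_trans (subset_leq_card ball_sub) _.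
rewrite expnSr; apply: leq_trans (card_bigcup_leq (b := D.+1) _) _.
  by move=> u _; rewrite cardsU1 -add1n leq_add ?leq_b1 ?deg.
by rewrite leq_mul2r IHi orbT.
Qed.

Lemma exists_far_vertex r D R : (forall u, #|[set w | e u w]| <= D) ->
  D.+1 ^ R < #|T| -> exists v, R < dist r v.
Proof.
move=> deg big; case: (pickP (fun v => R < dist r v)) => [v far|near]; first by exists v.
have ballT : [set v | dist r v <= R] = setT.
  by apply/setP => v; rewrite !inE leqNgt near.
by have := card_ball r deg R; rewrite ballT cardsT; lia.
Qed.

End Distance.

Section ShortestPathTree.
Variables (T : finType) (e : rel T).
Hypothesis sc : strongly_connected e.
Variable x : T.
Local Notation d v := (dist sc v x).

(* One step along a shortest path towards [x]; [tree_next x = x]. *)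
Definition tree_next v := odflt v [pick c | e v c && ((d c).+1 == d v)].

Lemma depth_root : d x = 0.
Proof. by apply/eqP; rewrite dist_eq0. Qed.

Lemma tree_nextP v : v != x -> e v (tree_next v) /\ (d (tree_next v)).+1 = d v.
Proof.
move=> vx; rewrite /tree_next; case: pickP => [c /andP[evc /eqP dc] // | none].
have [c evc dc] := dist_succ sc vx.
by have := none c; rewrite evc dc eqxx.
Qed.

Lemma depth_iter a v : a <= d v -> d (iter a tree_next v) = d v - a.
Proof.
elim: a => [|a IHa] le_av; first by rewrite subn0.
have vx : iter a tree_next v != x by rewrite -(dist_eq0 sc) IHa; lia.
by have [_] := tree_nextP vx; rewrite iterS IHa; lia.
Qed.

Lemma iter_depth v : iter (d v) tree_next v = x.
Proof. by apply/eqP; rewrite -(dist_eq0 sc) depth_iter ?subnn. Qed.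

Definition tree_path y := traject tree_next y (d y).+1.

Lemma mem_tree_path v y :
  (v \in tree_path y) = (d v <= d y) && (iter (d y - d v) tree_next y == v).
Proof.
apply/trajectP/andP => [[a lt_a ->]|[le_vy /eqP <-]].
  by rewrite depth_iter ?subKn ?leq_subr ?eqxx //; lia.
by exists (d y - d v); first lia.
Qed.

Lemma tree_path_root y : x \in tree_path y.
Proof. by rewrite mem_tree_path depth_root subn0 iter_depth eqxx. Qed.

Lemma tree_path_le u v y : u \in tree_path y -> v \in tree_path y ->
  d u <= d v -> u \in tree_path v.
Proof.
rewrite !mem_tree_path => /andP[_ /eqP iu] /andP[le_vy /eqP iv] le_uv.
rewrite le_uv -{2}iv -iterD -{2}iu; apply/eqP; congr iter; lia.
Qed.

Lemma path_traject_next y h : h <= d y -> path e y (traject tree_next (tree_next y) h).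
Proof.
elim: h y => [|h IHh] y le_hy //=.
have yx : y != x by rewrite -(dist_eq0 sc); lia.
by have [-> dy] := tree_nextP yx; rewrite IHh //; lia.
Qed.

Lemma uniq_traject_next y h : h <= (d y).+1 -> uniq (traject tree_next y h).
Proof.
elim: h y => [|h IHh] y le_hy //=.
case: (eqVneq y x) le_hy => [-> | yx] le_hy.
  by move: le_hy; rewrite depth_root ltnS leqn0 => /eqP->.
have [_ dy] := tree_nextP yx; rewrite IHh ?andbT; last lia.
by apply/trajectP => -[a lt_a] /(congr1 (fun v => d v)); rewrite -iterSr depth_iter; lia.
Qed.

Lemma uniq_tree_path y : uniq (tree_path y).
Proof. exact: uniq_traject_next. Qed.

Lemma path_tree_path u y : e u y -> path e u (tree_path y).
Proof. by move=> euy; rewrite /= euy path_traject_next. Qed.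

Lemma dipath_tree_path y : dipath e y x (tree_path y).
Proof.
rewrite /tree_path /= eqxx path_traject_next // last_traject iter_depth eqxx andbT.
exact: (uniq_traject_next (h := (d y).+1)).
Qed.

Lemma tree_path_dicycle y : e x y -> dicycle e (tree_path y).
Proof.
have := dipath_tree_path y; rewrite /tree_path /dicycle /=.
by case/and4P => _ path_s -> /eqP last_s exy; rewrite rcons_path path_s last_s exy.
Qed.

Lemma tree_path_head y : y \in tree_path y.
Proof. exact: mem_head. Qed.

Lemma tree_path_depth_inj u w v : u \in tree_path v -> w \in tree_path v ->
  d u = d w -> u = w.
Proof.
by rewrite !mem_tree_path => /andP[_ /eqP iu] /andP[_ /eqP iw] duw; rewrite -iu -iw duw.
Qed.

Variable n : nat.
Hypothesis short_cycles : forall c, dicycle e c -> size c < n.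

Lemma out_depth_lt y : e x y -> (d y).+1 < n.
Proof. by move=> /tree_path_dicycle/short_cycles; rewrite size_traject. Qed.

Definition fan v := [set y | e x y & v \in tree_path y].

Definition children v := [set c | (c != x) && (tree_next c == v) & fan c != set0].

Lemma child_depth v c : c \in children v -> tree_next c = v /\ d c = (d v).+1.
Proof. by rewrite inE => /andP[/andP[cx /eqP <-] _]; have [_ <-] := tree_nextP cx. Qed.

Lemma child_edge v c : c \in children v -> e c v.
Proof. by rewrite inE => /andP[/andP[cx /eqP <-] _]; have [] := tree_nextP cx. Qed.

(* Out-neighbours of [x] have depth below [n.-1], so fans are empty from that
   depth on, and each level up multiplies their size by at most [m.+1]. *)
Lemma card_fan m : (forall v, #|children v| <= m) ->
  forall t v, n.-1 <= d v + t -> #|fan v| <= m.+1 ^ t.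
Proof.
move=> few_children; elim=> [|t IHt] v le_nv.
  suff -> : fan v = set0 by rewrite cards0.
  apply/setP => y; rewrite in_set in_set0 mem_tree_path.
  by apply/negP => /andP[/out_depth_lt lt_yn /andP[le_vy _]]; lia.
have fan_sub : fan v \subset v |: \bigcup_(c in children v) fan c.
  apply/subsetP => y; rewrite in_set mem_tree_path => /andP[exy /andP[le_vy /eqP iv]].
  rewrite in_setU1; case: (eqVneq y v) => [-> | yv]; first by [].
  have lt_vy : d v < d y.
    by rewrite ltn_neqAle le_vy andbT; apply: contra_neq yv => dv; rewrite -iv -dv subnn.
  pose c := iter (d y - (d v).+1) tree_next y.
  have dc : d c = (d v).+1 by rewrite depth_iter; lia.
  have nc : tree_next c = v by rewrite /c -iterS subnSK.
  have yc : c \in tree_path y by rewrite mem_tree_path dc lt_vy; apply/eqP.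
  have cx : c != x by rewrite -(dist_eq0 sc) dc.
  apply/bigcupP; exists c; last by rewrite inE exy yc.
  by rewrite inE cx nc eqxx; apply/set0Pn; exists y; rewrite inE exy yc.
apply: leq_trans (subset_leq_card fan_sub) _.
have bound_union : #|\bigcup_(c in children v) fan c| <= #|children v| * m.+1 ^ t.
  apply: card_bigcup_leq => c /child_depth[_ dc]; apply: IHt; lia.
have := few_children v; have : 0 < m.+1 ^ t by rewrite expn_gt0.
rewrite cardsU1 expnS; nia.
Qed.

Lemma exists_hub m : m.+1 ^ n.-1 < #|[set y | e x y]| -> exists z, m < #|children z|.
Proof.
move=> big; case: (pickP (fun z => m < #|children z|)) => [z | none]; first by exists z.
have few_children v : #|children v| <= m by rewrite leqNgt none.
have fanx : fan x = [set y | e x y].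
  by apply/setP => y; rewrite !in_set tree_path_root andbT.
by have := card_fan few_children (t := n.-1) (v := x); rewrite fanx depth_root; lia.
Qed.

Definition spoke_end c := odflt x [pick y in fan c].

Lemma spoke_endP v c : c \in children v ->
  e x (spoke_end c) /\ c \in tree_path (spoke_end c).
Proof.
rewrite inE => /andP[_ /set0Pn[y yc]]; rewrite /spoke_end.
by case: pickP => [y' | /(_ y)]; rewrite ?yc // inE => /andP.
Qed.

Definition branch z c := traject tree_next (spoke_end c) (d (spoke_end c) - d z).

Lemma tree_path_branch z c : c \in children z ->
  tree_path (spoke_end c) = branch z c ++ tree_path z.
Proof.
move=> cz; have [nc dc] := child_depth cz; have [_] := spoke_endP cz.
rewrite /branch; set y := spoke_end c; rewrite mem_tree_path => /andP[le_cy /eqP iy].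
have iz : iter (d y - d z) tree_next y = z.
  by rewrite (_ : d y - d z = (d y - d c).+1) ?iterS ?iy //; lia.
by rewrite {1}/tree_path (_ : (d y).+1 = (d y - d z) + (d z).+1) ?trajectD ?iz //; lia.
Qed.

Lemma branchP z c : c \in children z ->
  [/\ path e x (branch z c), last x (branch z c) = c, uniq (x :: branch z c),
      z \notin branch z c & forall v, v \in branch z c -> c \in tree_path v].
Proof.
move=> cz; have [_ dc] := child_depth cz; have [exy cy] := spoke_endP cz.
have split_y := tree_path_branch cz; move: cy exy split_y; rewrite /branch.
set y := spoke_end c => cy exy split_y.
have := uniq_tree_path y; rewrite split_y cat_uniq => /and3P[uniq_b /hasPn disj _].
have notin_b v : v \in tree_path z -> v \notin traject tree_next y (d y - d z) by move/disj.
have zy : z \in tree_path y by rewrite split_y mem_cat tree_path_head orbT.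
split.
- by have := path_tree_path exy; rewrite split_y cat_path => /andP[].
- move: cy; rewrite mem_tree_path => /andP[le_cy /eqP iy].
  by rewrite (_ : d y - d z = (d y - d c).+1) /= ?last_traject //; lia.
- by rewrite /= uniq_b notin_b ?tree_path_root.
- by rewrite notin_b ?tree_path_head.
move=> v vb; have vy : v \in tree_path y by rewrite split_y mem_cat vb.
apply: (tree_path_le cy vy); rewrite dc ltnNge; apply/negP => le_vz.
by have := notin_b v (tree_path_le vy zy le_vz); rewrite vb.
Qed.

(* Tags a vertex with the position in [cs] of the child whose subtree holds it;
   subtrees of distinct children are disjoint. *)
Definition spoke_index (cs : seq T) v := find (fun c => c \in tree_path v) cs.

Lemma spoke_index_branch z cs i v : {subset cs <= children z} -> uniq cs ->
  i < size cs -> v \in branch z (nth x cs i) -> spoke_index cs v = i.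
Proof.
move=> sub_cs uniq_cs lt_i; set c := nth x cs i.
have [_ dc] := child_depth (sub_cs c (mem_nth x lt_i)).
have [_ _ _ _ below] := branchP (sub_cs c (mem_nth x lt_i)).
move=> /below cv; rewrite /spoke_index -[RHS](index_uniq x lt_i uniq_cs).
apply: eq_in_find => c' /sub_cs /child_depth[_ dc']; apply/idP/eqP => [c'v|->] //.
by apply: tree_path_depth_inj c'v cv _; rewrite dc dc'.
Qed.

Lemma spoke_index_tree_path z cs v : {subset cs <= children z} ->
  v \in tree_path z -> spoke_index cs v = size cs.
Proof.
move=> sub_cs; rewrite mem_tree_path => /andP[le_vz _]; apply/hasNfind/hasPn => c.
move=> /sub_cs/child_depth[_ dc]; rewrite mem_tree_path dc; apply/negP => /andP[lt_zv _].
by have := leq_ltn_trans le_vz lt_zv; rewrite ltnn.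
Qed.

Lemma enum_children_prefix z j : j <= #|children z| ->
  [/\ size (take j (enum (children z))) = j, uniq (take j (enum (children z)))
    & {subset take j (enum (children z)) <= children z}].
Proof.
move=> le_j; rewrite size_takel -?cardE // take_uniq ?enum_uniq //.
by split=> // c /mem_take; rewrite mem_enum.
Qed.

Definition spoke z c := x :: branch z c.

Lemma spoke_inj z : {in children z &, injective (spoke z)}.
Proof.
move=> c1 c2 c1z c2z /(congr1 (last x)) /=.
by have [_ -> _ _ _] := branchP c1z; have [_ -> _ _ _] := branchP c2z.
Qed.

Lemma spoke_dicycle c : c \in children x -> dicycle e (spoke x c).
Proof.
move=> cx; have [path_b last_b uniq_b _ _] := branchP cx.
by rewrite /dicycle /= rcons_path path_b last_b child_edge ?uniq_b.
Qed.

Lemma spoke_dipath z c : z != x -> c \in children z -> dipath e x z (rcons (spoke z c) z).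
Proof.
move=> zx cz; have [path_b last_b uniq_b zb _] := branchP cz.
rewrite /dipath /spoke rcons_cons eqxx rcons_path path_b last_b child_edge //=.
move: uniq_b; rewrite cons_uniq => /andP[xb ub].
by rewrite mem_rcons inE negb_or eq_sym zx xb rcons_uniq zb ub last_rcons eqxx.
Qed.

Lemma spoke_short z c : c \in children z ->
  size (undup (rcons (spoke z c) z ++ tree_path z)) < n.
Proof.
move=> cz; have [exy _] := spoke_endP cz.
apply: leq_ltn_trans (short_cycles (tree_path_dicycle exy)).
apply: uniq_leq_size (undup_uniq _) _ => v.
rewrite mem_undup (tree_path_branch cz) !mem_cat mem_rcons.
case/orP => [/predU1P[-> | /predU1P[-> | vb]] | vz]; apply/orP.
- by right; apply: tree_path_head.
- by right; apply: tree_path_root.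
- by left.
- by right.
Qed.

Lemma hub_cycles m : m < #|children x| ->
  exists F G, system e x x m 1 F G /\ n_short_system n x x F G.
Proof.
move=> many; set cs := take m.+1 (enum (children x)).
have [size_cs uniq_cs sub_cs] := enum_children_prefix many.
have FG := cat_take_drop m (map (spoke x) cs).
exists (take m (map (spoke x) cs)), (drop m (map (spoke x) cs)); split; first split.
- by rewrite size_take size_map size_cs ltnSn.
- by rewrite size_drop size_map size_cs subSnn.
- rewrite eqxx FG all_map; apply/allP => c /sub_cs cx /=.
  by rewrite spoke_dicycle ?mem_head.
- by rewrite FG map_inj_in_uniq //; apply: sub_in2 (@spoke_inj x).
- rewrite FG; apply: (internally_disjoint_by_tag (tag := spoke_index cs)) => i v.
  rewrite size_map => lt_i; rewrite (nth_map x) // inE => /predU1P[-> | vb].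
    by constructor 1.
  by constructor 3; apply: spoke_index_branch vb.
rewrite /n_short_system eqxx FG => _ /mapP[c /sub_cs cx ->].
exact/short_cycles/spoke_dicycle.
Qed.

Lemma hub_paths m z : z != x -> m < #|children z| ->
  exists F G, system e x z m 1 F G /\ n_short_system n x z F G.
Proof.
move=> zx /ltnW many; have xz : x != z by rewrite eq_sym.
set cs := take m (enum (children z)).
have [size_cs uniq_cs sub_cs] := enum_children_prefix many.
pose F := [seq rcons (spoke z c) z | c <- cs].
exists F, [:: tree_path z]; split; first split.
- by rewrite size_map.
- by [].
- rewrite xz all_map all_seq1 dipath_tree_path andbT.
  by apply/allP => c /sub_cs; apply: spoke_dipath.
- rewrite cat_uniq /= orbF andbT map_inj_in_uniq // ?uniq_cs.
    by apply/mapP => -[c _ /(congr1 (head x)) /= zx']; rewrite zx' eqxx in zx.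
  move=> c1 c2 /sub_cs c1z /sub_cs c2z /rcons_inj[eq_b].
  by apply: (spoke_inj c1z c2z); rewrite /spoke eq_b.
- apply: (internally_disjoint_by_tag (tag := spoke_index cs)) => i v.
  rewrite size_cat size_map size_cs addn1 ltnS nth_cat size_map size_cs => le_im.
  case: ltnP => [lt_im | ge_im].
    rewrite (nth_map x) ?size_cs // mem_rcons => /predU1P[-> | /predU1P[-> | vb]].
    + by constructor 2.
    + by constructor 1.
    + by constructor 3; apply: spoke_index_branch vb; rewrite ?size_cs.
  rewrite (_ : i - m = 0) /=; last lia.
  by move=> vz; constructor 3; rewrite (spoke_index_tree_path sub_cs vz) size_cs; lia.
rewrite /n_short_system xz => P Q /mapP[c /sub_cs cz ->]; rewrite inE => /eqP->.
exact: spoke_short.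
Qed.

Lemma hub_system m : m.+1 ^ n.-1 < #|[set y | e x y]| ->
  exists y F G, system e x y m 1 F G /\ n_short_system n x y F G.
Proof.
move=> /exists_hub[z many]; case: (eqVneq z x) many => [-> | zx] many.
  by exists x; apply: hub_cycles.
by exists z; apply: hub_paths.
Qed.

End ShortestPathTree.

Section ChainSelection.
Variables (meet : rel nat) (L B k : nat).
Hypothesis meet_sym : symmetric meet.
Hypothesis meet_succ : forall i, i.+1 < L -> meet i i.+1.
Hypothesis meet_near : forall i j, i < j < L -> meet i j -> j <= i + B.

(* Chosen cycles two steps apart cannot meet: the later one lies beyond the
   farthest cycle meeting the earlier one. *)
Definition farthest i := \max_(j < L | meet i j) j.

Lemma farthestP i : i.+1 < L ->
  [/\ meet i (farthest i), i < farthest i <= i + B, farthest i < L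
    & forall j, farthest i < j < L -> ~~ meet i j].
Proof.
move=> lt_iL; have meet_i1 := meet_succ lt_iL.
have nonempty : 0 < #|[pred j : 'I_L | meet i j]|.
  by apply/card_gt0P; exists (Ordinal lt_iL).
have [j0 meet_j0 max_j0] := eq_bigmax_cond val nonempty.
have -> : farthest i = j0 by rewrite /farthest -max_j0.
have j0_max j : j < L -> meet i j -> j <= j0.
  by move=> lt_jL meet_j; rewrite -max_j0 (leq_bigmax_cond (Ordinal lt_jL)).
have {}meet_j0 : meet i j0 by move: meet_j0; rewrite inE.
have lt_ij0 : i < j0 by apply: j0_max.
split=> [//||//|j /andP[lt_j0j lt_jL]].
- by rewrite lt_ij0 meet_near ?lt_ij0 ?ltn_ord.
- by apply/negP => /(j0_max _ lt_jL); rewrite leqNgt lt_j0j.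
Qed.

Definition chain_index t := iter t farthest 0.

Hypothesis long_enough : k * B + 2 <= L.

Lemma chain_index_le t : t < k -> chain_index t <= t * B.
Proof.
elim: t => [|t IHt] lt_tk; first by [].
have le_t := IHt (ltnW lt_tk).
have lt_tL : (chain_index t).+1 < L by nia.
have [_ /andP[_ le_far] _ _] := farthestP lt_tL.
by apply: leq_trans le_far _; rewrite mulSn; lia.
Qed.

Lemma chain_index_lt t : t < k -> (chain_index t).+1 < L.
Proof. by move=> lt_tk; have := chain_index_le lt_tk; nia. Qed.

Lemma chain_index_mono s t : s < t < k -> chain_index s < chain_index t.
Proof.
elim: t => [|t IHt] /andP[lt_st lt_tk]; first by [].
have [_ /andP[lt_far _] _ _] := farthestP (chain_index_lt (ltnW lt_tk)).
have [-> // | ne_st] := eqVneq s t.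
by apply: ltn_trans (IHt _) lt_far; lia.
Qed.

Lemma chain_index_meet s t : s < k -> t < k -> s != t ->
  meet (chain_index s) (chain_index t) = (s == t.+1) || (t == s.+1).
Proof.
wlog lt_st : s t / s < t => [wlog_lt|lt_sk lt_tk _].
  move=> lt_sk lt_tk ne_st; case: (ltngtP s t) => [lt_st | lt_ts | eq_st].
  - exact: wlog_lt.
  - by rewrite meet_sym orbC wlog_lt // eq_sym.
  - by rewrite eq_st eqxx in ne_st.
rewrite (ltn_eqF (leqW lt_st)) /=.
have [meet_far _ _ not_beyond] := farthestP (chain_index_lt lt_sk).
case: eqP => [-> // | ne_ts]; apply/negbTE/not_beyond.
rewrite (ltnW (chain_index_lt lt_tk)) andbT; apply: (chain_index_mono (s := s.+1)); lia.
Qed.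

End ChainSelection.

Section GeodesicCycles.
Variables (T : finType) (e : rel T).
Hypothesis sc : strongly_connected e.
Variable n : nat.
Hypothesis short_cycles : forall c, dicycle e c -> size c < n.
Variables (a b : T) (p : seq T).
Hypothesis walk_p : walk e a p b.
Hypothesis shortest_p : forall q, walk e a q b -> size p <= size q.

Local Notation u i := (nth a (a :: p) i).

Lemma geodesic_segment i j q : i <= j <= size p ->
  walk e (u i) q (u j) -> j - i <= size q.
Proof.
move=> /andP[le_ij le_jp] walk_q; move/andP: walk_p => [path_p /eqP last_p].
have walk_pre : walk e a (take i p) (u i).
  by rewrite /walk (take_path _ path_p) last_take ?eqxx //; lia.
have walk_suf : walk e (u j) (drop j p) b.
  move: path_p last_p; rewrite -{1 2}(cat_take_drop j p) cat_path last_cat last_take //.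
  by rewrite /walk => /andP[_ ->] ->; rewrite eqxx.
have := shortest_p (walk_cat (walk_cat walk_pre walk_q) walk_suf).
by rewrite !size_cat size_take size_drop; case: ltnP; lia.
Qed.

Definition geodesic_cycle i := edge_cycle sc (u i) (u i.+1).

Lemma geodesic_cycleP i : i < size p ->
  [/\ dicycle e (geodesic_cycle i), u i \in geodesic_cycle i & u i.+1 \in geodesic_cycle i].
Proof. by move=> lt_ip; apply: edge_cycleP; move/andP: walk_p => [/(pathP a) ->]. Qed.

(* Going round both cycles leads from [u i] to [u j.+1] in fewer than [2 * n]
   steps, whereas the geodesic needs [j.+1 - i]. *)
Lemma geodesic_cycles_far i j : i < j < size p ->
  has (mem (geodesic_cycle i)) (geodesic_cycle j) -> j <= i + 2 * n.
Proof.
move=> /andP[lt_ij lt_jp] /hasP[w wj wi].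
have [dicyc_i ui _] := geodesic_cycleP (ltn_trans lt_ij lt_jp).
have [dicyc_j _ uj1] := geodesic_cycleP lt_jp.
have [[_ cyc_i _] [_ cyc_j _]] := (and3P dicyc_i, and3P dicyc_j).
have [q1 walk_q1 size_q1] := cycle_walk cyc_i ui wi.
have [q2 walk_q2 size_q2] := cycle_walk cyc_j wj uj1.
have le_ij1 : i <= j.+1 <= size p by lia.
have := geodesic_segment le_ij1 (walk_cat walk_q1 walk_q2).
have := short_cycles dicyc_i; have := short_cycles dicyc_j; rewrite size_cat; lia.
Qed.

Lemma geodesic_semi_chain k : k * (2 * n) + 2 <= size p ->
  exists cs, narrow_semi_chain e n k cs.
Proof.
move=> long_p; pose meet i j := has (fun v => v \in geodesic_cycle i) (geodesic_cycle j).
have meet_sym : symmetric meet by move=> i j; apply: has_sym.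
have meet_succ i : i.+1 < size p -> meet i i.+1.
  move=> lt_ip; apply/hasP; exists (u i.+1).
    by have [] := geodesic_cycleP lt_ip.
  by have [] := geodesic_cycleP (ltnW lt_ip).
pose C t := geodesic_cycle (chain_index meet (size p) t).
have C_cycle t : t < k -> dicycle e (C t).
  move=> lt_tk; have := chain_index_lt meet_succ geodesic_cycles_far long_p lt_tk.
  by move=> /ltnW/geodesic_cycleP[].
exists (map C (iota 0 k)); split.
- by rewrite size_map size_iota.
- by apply/allP => c /mapP[t]; rewrite mem_iota => /C_cycle ? ->.
- by apply/allP => c /mapP[t]; rewrite mem_iota => /C_cycle/short_cycles ? ->.
move=> i j lt_ik lt_jk ne_ij.
rewrite !(nth_map 0) ?size_iota // !nth_iota // !add0n.
exact (chain_index_meet meet_sym meet_succ geodesic_cycles_far long_p lt_ik lt_jk ne_ij).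
Qed.

End GeodesicCycles.

Theorem theorem3p4 :
  forall n k : nat, exists N : nat,
  forall (T : finType) (e : rel T),
    irreflexive e -> strongly_connected e -> N <= #|T| ->
    (exists c : seq T, dicycle e c /\ n <= size c)
    \/ (exists cs : seq (seq T), narrow_semi_chain e n k cs)
    \/ (exists (m : nat) (x y : T) (F G : seq (seq T)),
          (k - 1) * n + 3 <= m /\ system e x y m 1 F G /\ n_short_system n x y F G).
Proof.
move=> n k; set m := (k - 1) * n + 3; set D := m.+1 ^ n.-1; set R := k * (2 * n) + 2.
exists (D.+1 ^ R).+1 => T e _ sc big.
have [long | no_long] := classic (exists c, dicycle e c /\ n <= size c); first by left.
have short_cycles c : dicycle e c -> size c < n.
  by move=> c_cycle; rewrite ltnNge; apply/negP => le_nc; apply: no_long; exists c.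
right; case: (pickP (fun x => D < #|[set y | e x y]|)) => [x hub | bounded].
  by right; have [y [F [G]]] := hub_system sc short_cycles hub; exists m, x, y, F, G.
left; have /card_gt0P[r _] : 0 < #|T| by lia.
have deg u : #|[set w | e u w]| <= D by rewrite leqNgt bounded.
have [v far] := exists_far_vertex sc r deg big.
have [p walk_p size_p] := dist_walk sc r v.
apply: (geodesic_semi_chain sc short_cycles walk_p); last by rewrite size_p ltnW.
by move=> q /(dist_min sc); rewrite size_p.
Qed.
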